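(* Let $T$ be a tree on at least three vertices and $S \subseteq V(T)$. For a leaf $\ell \in S$, say that $S$ satisfies condition (II) for $\ell$ if every edge $\{a,b\}$ of $T$ with $a$ closer to $\ell$ than $b$ satisfies: (i) if $a,b\notin S$ then $N(b)\cap S=\emptyset$; (ii) if $a\notin S$, $b\in S$ then $|N(b)\cap S|\le 1$; (iii) if $a\in S$, $b\notin S$ then $|(N(b)\cap S)\setminus\{a\}|=1$; (iv) if $a,b\in S$ then $|(N(b)\cap S)\setminus\{a\}|=0$. If $S$ satisfies condition (II) for some leaf $\ell' \in S$, then $S$ satisfies condition (II) for every other leaf $\ell'' \in S$.
   Context: $N(b)$ is the set of neighbors of $b$; distances are graph distances in $T$; a leaf is a vertex of degree one. *)

From mathcomp Require Import all_boot.
Set Implicit Arguments. Unset Strict Implicit. Unset Printing Implicit Defensive.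

Section Tree.
Variables (T : finType) (e : rel T).

Definition simple_graph := symmetric e /\ irreflexive e.
Definition acyclic := forall c : seq T, uniq c -> 2 < size c -> ~~ cycle e c.
Definition connected := forall x y : T, connect e x y.
Definition is_tree := [/\ simple_graph, connected & acyclic].

Definition walkb (x y : T) (n : nat) : bool :=
  [exists p : n.-tuple T, path e x p && (last x p == y)].
(* graph distance: least n with a walk of length n (all distances in a
   connected graph on |T| vertices are < |T|) *)
Definition dist (x y : T) : nat := find (walkb x y) (iota 0 #|T|).

Definition nbhd (b : T) : {set T} := [set x | e b x].
Definition leaf (v : T) : bool := #|nbhd v| == 1.

Definition condII (S : {set T}) (l : T) : Prop :=
  forall a b : T, e a b -> dist l a < dist l b ->
    [/\ (a \notin S -> b \notin S -> nbhd b :&: S = set0),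
        (a \notin S -> b \in S -> #|nbhd b :&: S| <= 1),
        (a \in S -> b \notin S -> #|(nbhd b :&: S) :\ a| = 1)
      & (a \in S -> b \in S -> #|(nbhd b :&: S) :\ a| = 0)].
End Tree.

From mathcomp Require Import all_boot.
Set Implicit Arguments. Unset Strict Implicit. Unset Printing Implicit Defensive.

(* Rooting the tree at l'' instead of l' reverses exactly the edges of the
   path from l' to l''; all other edges keep their orientation and inherit
   condition (II).  On a reversed edge {a, b} (a nearer to l'', b nearer to
   l'), a and b cannot both lie outside S: condition (i) for l' on the edge
   (b, a) empties N(a) of S, so the next path vertex towards l'' is outside S
   as well, and this propagates down to l'' itself, which is in S.  Every
   vertex of S has at most one neighbour in S (by (ii) or (iv) at its parent
   towards l', or because l' is a leaf), which gives (ii) and (iv); (iii)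
   follows from (i) or (iii) at the parent of b towards l'. *)

Section Distance.
Variables (T : finType) (e : rel T).

Lemma walkbP x y n :
  reflect (exists p : seq T, [/\ size p = n, path e x p & last x p = y])
          (walkb e x y n).
Proof.
apply: (iffP existsP) => [[p /andP[hp /eqP hl]]|[p [<- hp hl]]].
  by exists (val p); rewrite size_tuple.
by exists (in_tuple p); rewrite /= hp hl eqxx.
Qed.

Lemma dist_le_walk x y n : walkb e x y n -> n < #|T| -> dist e x y <= n.
Proof.
move=> hw hn; rewrite /dist; case: leqP => // hlt.
by have := before_find 0 hlt; rewrite nth_iota // add0n hw.
Qed.

Lemma dist_eq0 x y : (dist e x y == 0) = (x == y).
Proof.
have T_gt0 : 0 < #|T| by apply/card_gt0P; exists x.
apply/eqP/eqP => [d0|<-]; last first.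
  by apply/eqP; rewrite -leqn0 dist_le_walk //; apply/walkbP; exists [::].
have hw : has (walkb e x y) (iota 0 #|T|).
  by rewrite has_find size_iota -/(dist e x y) d0.
have := nth_find 0 hw; rewrite -/(dist e x y) d0 nth_iota //.
by case/walkbP => p [+ _ <-]; case: p.
Qed.

Section Connected.
Hypothesis conn : connected e.

Lemma has_walkb x y : has (walkb e x y) (iota 0 #|T|).
Proof.
have /connectP[p hp hl] := conn x y.
case/shortenP: hp hl => p' hp' hu _ hl.
apply/hasP; exists (size p'); last by apply/walkbP; exists p'.
rewrite mem_iota add0n /=; have := max_card (mem (x :: p')).
by move/card_uniqP: hu => ->.
Qed.

Lemma dist_lt_card x y : dist e x y < #|T|.
Proof. by have := has_walkb x y; rewrite has_find size_iota. Qed.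

Lemma walkb_dist x y : walkb e x y (dist e x y).
Proof. by have := nth_find 0 (has_walkb x y); rewrite nth_iota ?dist_lt_card. Qed.

Lemma exists_parent l x : x != l -> exists2 y, e y x & dist e l y < dist e l x.
Proof.
move=> xl; case/walkbP: (walkb_dist l x) => p [hs hp hl].
case/lastP: p hs hp hl => [|q z]; first by move=> _ _ /= hl; rewrite hl eqxx in xl.
rewrite size_rcons rcons_path last_rcons => hs /andP[hq hz] hzx; subst z.
exists (last l q) => //; rewrite -hs ltnS dist_le_walk //; first by apply/walkbP; exists q.
by rewrite (leq_trans _ (dist_lt_card l x)) // -hs.
Qed.

Definition avoid (x : T) : rel T := fun u v => [&& e u v, u != x & v != x].

Lemma connect_avoid_le_dist l x w :
  w != x -> dist e l w <= dist e l x -> connect (avoid x) l w.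
Proof.
have [n] := ubnP (dist e l w); elim: n w => // n IH w /ltnSE dn wx dwx.
have [->|wl] := eqVneq w l; first exact: connect0.
have [y yw dyw] := exists_parent wl.
have yx : y != x by apply: contraTneq (leq_trans dyw dwx) => ->; rewrite ltnn.
apply: connect_trans (IH y _ yx _) (connect1 _) => /=.
- exact: leq_trans dyw dn.
- exact: ltnW (leq_trans dyw dwx).
- by rewrite /avoid /= yw yx wx.
Qed.

Section Tree.
Hypotheses (sym : symmetric e) (irr : irreflexive e) (acyc : acyclic e).

Lemma connect_avoid_sym x : connect_sym (avoid x).
Proof. by apply: sym_connect_sym => u v; rewrite /avoid sym [(u != x) && _]andbC. Qed.

Lemma avoid_path_notin x u p : path (avoid x) u p -> x \notin p.
Proof.
elim: p u => //= v p IH u /andP[/and3P[_ _ vx] /IH xp].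
by rewrite inE negb_or eq_sym vx.
Qed.

Lemma neighbors_disconnected x p q :
  e x p -> e x q -> p != q -> ~~ connect (avoid x) p q.
Proof.
move=> xp xq pq; apply/negP => /connectP[r hr hl].
case/shortenP: hr hl => r' hr' ur' _ hl; subst q.
have px : p != x by apply: contraTneq xp => ->; rewrite irr.
have ucyc : uniq [:: x, p & r'].
  rewrite /= -/(uniq (p :: r')) ur' andbT inE negb_or eq_sym px.
  exact: avoid_path_notin hr'.
have size_cyc : 2 < size [:: x, p & r'].
  by rewrite /= !ltnS lt0n size_eq0; apply: contraNneq pq => ->.
have /negP := acyc ucyc size_cyc; apply.
rewrite /cycle /= xp rcons_path sym xq andbT.
by apply: sub_path hr' => u v /and3P[].
Qed.

Lemma closer_neighbor_uniq l x p q : e x p -> e x q ->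
  dist e l p <= dist e l x -> dist e l q <= dist e l x -> p = q.
Proof.
move=> xp xq dp dq; apply/eqP/negPn/negP => pq.
have nx u : e x u -> u != x by move=> xu; apply: contraTneq xu => ->; rewrite irr.
move/negP: (neighbors_disconnected xp xq pq); apply; apply: (connect_trans (y := l)).
- by rewrite connect_avoid_sym connect_avoid_le_dist ?nx.
- exact: connect_avoid_le_dist (nx q xq) dq.
Qed.

Lemma dist_adj_neq l u v : e u v -> dist e l u != dist e l v.
Proof.
move=> uv; apply/eqP => duv.
have [ul|ul] := eqVneq u l.
  have: dist e l v == 0 by rewrite -duv ul dist_eq0.
  by rewrite dist_eq0 => /eqP vl; move: uv; rewrite ul vl irr.
have [p pu dpu] := exists_parent ul.
have pv : p = v.
  by apply: (closer_neighbor_uniq (x := u)) _ uv (ltnW dpu) _; rewrite ?duv // sym.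
by move: dpu; rewrite pv duv ltnn.
Qed.

End Tree.
End Connected.
End Distance.

Section ConditionII.
Variables (T : finType) (e : rel T) (S : {set T}) (l m : T).
Hypotheses (sym : symmetric e) (irr : irreflexive e).
Hypotheses (conn : connected e) (acyc : acyclic e).
Hypotheses (condII_l : condII e S l) (lS : l \in S) (leaf_l : leaf e l).

Lemma condII_card_nbhdS_le1 b : b \in S -> #|nbhd e b :&: S| <= 1.
Proof.
move=> bS; have [->|bl] := eqVneq b l.
  by rewrite (leq_trans (subset_leq_card (subsetIl _ _))) // (eqP leaf_l).
have [p pb dpb] := exists_parent conn bl.
have [_ hii _ hiv] := condII_l pb dpb.
have [pS|/hii] := boolP (p \in S); last exact.
by rewrite (cardsD1 p) (hiv pS bS) addn0 leq_b1.
Qed.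

Hypothesis mS : m \in S.

Lemma condII_reversed_edge_meetS a b : e a b ->
  dist e m a < dist e m b -> dist e l b < dist e l a -> (a \in S) || (b \in S).
Proof.
have [n] := ubnP (dist e m a); elim: n a b => // n IH a b /ltnSE dn ab dmab dlba.
apply/norP => -[aS bS].
have am : a != m by apply: contraNneq aS => ->.
have [c ca dmca] := exists_parent conn am.
have dlac : dist e l a < dist e l c.
  have := dist_adj_neq conn sym irr acyc l ca; rewrite neq_ltn => /orP[dlca|//].
  have cb : c = b.
    apply: (closer_neighbor_uniq conn sym irr acyc (x := a)) (ltnW dlca) (ltnW dlba).
    - by rewrite sym.
    - exact: ab.
  by move: dmca; rewrite cb ltnNge ltnW.
have := IH c a (leq_trans dmca dn) ca dmca dlac; rewrite (negbTE aS) orbF => cS.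
have ba : e b a by rewrite sym.
have [hi _ _ _] := condII_l ba dlba.
by move/setP/(_ c): (hi bS aS); rewrite !inE sym ca cS.
Qed.

Lemma condII_reversed a b : e a b ->
    dist e m a < dist e m b -> dist e l b < dist e l a ->
  [/\ (a \notin S -> b \notin S -> nbhd e b :&: S = set0),
      (a \notin S -> b \in S -> #|nbhd e b :&: S| <= 1),
      (a \in S -> b \notin S -> #|(nbhd e b :&: S) :\ a| = 1)
    & (a \in S -> b \in S -> #|(nbhd e b :&: S) :\ a| = 0)].
Proof.
move=> ab dmab dlba; have aN : a \in nbhd e b by rewrite inE sym.
split=> aS bS.
- by have := condII_reversed_edge_meetS ab dmab dlba; rewrite (negbTE aS) (negbTE bS).
- exact: condII_card_nbhdS_le1.
- have aNS : a \in nbhd e b :&: S by rewrite inE aN aS.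
  have bl : b != l by apply: contraNneq bS => ->.
  have [p pb dlpb] := exists_parent conn bl.
  have [hi _ hiii _] := condII_l pb dlpb.
  have [pS|pS] := boolP (p \in S); last by rewrite (hi pS bS) inE in aNS.
  have pNS : p \in nbhd e b :&: S by rewrite inE pS andbT inE sym.
  have := cardsD1 p (nbhd e b :&: S); rewrite pNS (hiii pS bS).
  by rewrite (cardsD1 a) aNS => -[].
- have := condII_card_nbhdS_le1 bS; rewrite (cardsD1 a) inE aN aS.
  by case: #|_|.
Qed.

End ConditionII.

Theorem mainTheorem10 (T : finType) (e : rel T) (S : {set T}) (l' l'' : T) :
  is_tree e -> 3 <= #|T| ->
  l' \in S -> leaf e l' -> l'' \in S -> leaf e l'' -> l'' != l' ->
  condII e S l' -> condII e S l''.
Proof.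
move=> [[sym irr] conn acyc] _ l'S leaf_l' l''S _ _ condII_l' a b ab dl''ab.
case: (ltngtP (dist e l' a) (dist e l' b)) => [dl'ab|dl'ba|dl'eq].
- exact: condII_l'.
- exact: (condII_reversed sym irr conn acyc condII_l' l'S leaf_l' l''S ab dl''ab dl'ba).
- by move: (dist_adj_neq conn sym irr acyc l' ab); rewrite dl'eq eqxx.
Qed.
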